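(* The monoid $\operatorname{NDPF}^{(1)}_N$ is $\mathcal{J}$-trivial.
   Context: $\operatorname{NDPF}^{(1)}_N$ is the set of functions $f:\mathbb{Z}\to\mathbb{Z}$ that are regressive ($f(i)\le i$), order preserving and skew periodic ($f(i+N)=f(i)+N$), excluding the shift functions $i\mapsto i-t$ with $t\ne 0$, a monoid under composition. A monoid $M$ is $\mathcal J$-trivial if for $f,g\in M$, $MfM=MgM$ implies $f=g$. *)

From Stdlib Require Import ZArith.
Open Scope Z_scope.

Definition regressive (f : Z -> Z) : Prop := forall i, f i <= i.

Definition order_preserving (f : Z -> Z) : Prop := forall i j, i <= j -> f i <= f j.

Definition skew_periodic (N : Z) (f : Z -> Z) : Prop := forall i, f (i + N) = f i + N.

Definition is_nontrivial_shift (f : Z -> Z) : Prop :=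
  exists t, t <> 0 /\ forall i, f i = i - t.

Definition NDPF1 (N : Z) (f : Z -> Z) : Prop :=
  regressive f /\ order_preserving f /\ skew_periodic N f /\ ~ is_nontrivial_shift f.

Definition in_two_sided_ideal (N : Z) (f h : Z -> Z) : Prop :=
  exists a b, NDPF1 N a /\ NDPF1 N b /\ forall i, h i = a (f (b i)).

Definition NDPF1_J_trivial (N : Z) : Prop :=
  forall f g, NDPF1 N f -> NDPF1 N g ->
    (forall h, in_two_sided_ideal N f h <-> in_two_sided_ideal N g h) ->
    forall i, f i = g i.

(* Every element a o f o b of the ideal M f M lies pointwise below f, because b and a
   are regressive and f is order preserving. Hence M f M = M g M, which puts f in
   M g M and g in M f M, forces f <= g <= f. *)
From Stdlib Require Import ZArith Lia.
Open Scope Z_scope.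

Lemma NDPF1_id (N : Z) : NDPF1 N (fun i => i).
Proof.
  repeat split.
  - intro i; lia.
  - intros i j Hij; exact Hij.
  - intros [t [Ht Hshift]]. specialize (Hshift 0). lia.
Qed.

Lemma in_two_sided_ideal_refl (N : Z) (f : Z -> Z) : in_two_sided_ideal N f f.
Proof.
  exists (fun i => i), (fun i => i).
  split; [apply NDPF1_id | split; [apply NDPF1_id | reflexivity]].
Qed.

Lemma regressive_sandwich_le (a f b : Z -> Z) :
  regressive a -> regressive b -> order_preserving f ->
  forall i, a (f (b i)) <= f i.
Proof.
  intros Ha Hb Hf i.
  pose proof (Ha (f (b i))) as Hafb.
  pose proof (Hf (b i) i (Hb i)) as Hfb.
  lia.
Qed.

Lemma in_two_sided_ideal_le (N : Z) (f h : Z -> Z) :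
  order_preserving f -> in_two_sided_ideal N f h -> forall i, h i <= f i.
Proof.
  intros Hf [a [b [[Ha _] [[Hb _] Hh]]]] i.
  rewrite Hh.
  exact (regressive_sandwich_le a f b Ha Hb Hf i).
Qed.

Theorem mainTheorem7 (N : Z) (hN : 1 <= N) : NDPF1_J_trivial N.
Proof.
  intros f g [_ [Hf _]] [_ [Hg _]] Hideal i.
  pose proof (in_two_sided_ideal_le N g f Hg
                (proj1 (Hideal f) (in_two_sided_ideal_refl N f)) i) as Hfg.
  pose proof (in_two_sided_ideal_le N f g Hf
                (proj2 (Hideal g) (in_two_sided_ideal_refl N g)) i) as Hgf.
  lia.
Qed.
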